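(* The solitary mechanism satisfies weak UIC, weak MIC, and $c$-weak-SCP for every integer $c\ge1$, for any block size $B\ge2$ (finite or infinite).
   Context: Setting (TFM). Each user $i$ has a true value $v_i\ge0$ and submits a single bid $b_i\ge0$. A TFM consists of an inclusion rule (run by the miner, choosing at most $B$ bids to include) and confirmation, payment and miner-revenue rules (run by the blockchain on the included bids). Solitary mechanism: include the two highest bids (a missing bid counts as $0$); only the highest included bid is confirmed, and it pays the second-highest included bid; the miner is paid the second-highest included bid. Strategic players: a user, the miner, or the miner with some users; they may have users bid untruthfully after seeing all bids, inject fake bids (true value $0$), and (if the miner is involved) include any at most $B$ available bids. Weak ($1$-strict) utility: miner revenue (if the miner is in the player) plus $v-p$ for each confirmed transaction of the player (true value $v$, payment $p$), minus $(b-v)$ for each unconfirmed transaction of the player with bid $b>v$. Weak UIC: with an honest miner, each user's weak utility is maximized by truthful bidding without fake bids, whatever the other bids. Weak MIC: the miner's weak utility is maximized by honestly following the inclusion rule without fake bids, whatever the bids. $c$-weak-SCP: for every coalition of the miner with between $1$ and $c$ users, joint weak utility is maximized by truthful bidding and honest miner behavior, whatever the other bids. *)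

From mathcomp Require Import all_boot all_order all_algebra.
Set Implicit Arguments. Unset Strict Implicit. Unset Printing Implicit Defensive.
Import Order.TTheory GRing.Theory Num.Theory.
Local Open Scope ring_scope.

Section TFM.
Variable R : realFieldType.

(* A bid entry: (bid amount, owner).  owner = None : an honest outside user;
   owner = Some v : a transaction of the strategic player with true value v
   (fake bids are player transactions with true value 0). *)
Definition entry := (R * option R)%type.

Definition ge_amt (x y : entry) : bool := y.1 <= x.1.

(* Block size: Some n (finite n) or None (infinite). *)
Definition fits (B : option nat) (n : nat) : bool :=
  if B is Some b then (n <= b)%N else true.

(* Honest inclusion rule: include the two highest bids (stable sort of the
   pool; ties are broken by the position in the pool). *)
Definition honest_block (pool : seq entry) : seq entry :=
  take 2 (sort ge_amt pool).

Definition confirmed (blk : seq entry) : option entry := ohead (sort ge_amt blk).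

Definition payment (blk : seq entry) : R := (nth (0, None) (sort ge_amt blk) 1).1.

Definition miner_revenue (blk : seq entry) : R := payment blk.

Definition unconfirmed (pool blk : seq entry) : seq entry :=
  if confirmed blk is Some e then rem e pool else pool.

Definition overbid (e : entry) : R :=
  if e.2 is Some v then (if v < e.1 then e.1 - v else 0) else 0.

Definition weak_util (miner_in : bool) (pool blk : seq entry) : R :=
  (if miner_in then miner_revenue blk else 0)
  + (match confirmed blk with Some (_, Some v) => v - payment blk | _ => 0 end)
  - \sum_(e <- unconfirmed pool blk) overbid e.

(* a block the (possibly strategic) miner may choose: at most B bids drawn
   from the available bids (each at most once), in any order *)
Definition valid_block (B : option nat) (pool blk : seq entry) : Prop :=
  fits B (size blk) /\ exists m : bitseq, perm_eq blk (mask m pool).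

Definition nonneg (x : R) : bool := 0 <= x.

Definition tag_out (others : seq R) : seq entry := [seq (x, None) | x <- others].

Definition truthful_pool (others vs : seq R) : seq entry :=
  tag_out others ++ [seq (v, Some v) | v <- vs].

Definition dev_pool (others : seq R) (bvs : seq (R * R)) (fakes : seq R)
  : seq entry :=
  tag_out others ++ [seq (p.1, Some p.2) | p <- bvs]
                 ++ [seq (f, Some 0) | f <- fakes].

(* Weak UIC (honest miner, a single strategic user). The order of the pool
   (which only affects tie-breaking) is arbitrary in both scenarios. *)
Definition weak_UIC : Prop :=
  forall (v b : R) (others fakes : seq R) (hpool dpool : seq entry),
    0 <= v -> 0 <= b -> all nonneg others -> all nonneg fakes ->
    perm_eq hpool (truthful_pool others [:: v]) ->
    perm_eq dpool (dev_pool others [:: (b, v)] fakes) ->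
    weak_util false dpool (honest_block dpool)
      <= weak_util false hpool (honest_block hpool).

Definition weak_MIC (B : option nat) : Prop :=
  forall (others fakes : seq R) (hpool dpool blk : seq entry),
    all nonneg others -> all nonneg fakes ->
    perm_eq hpool (truthful_pool others [::]) ->
    perm_eq dpool (dev_pool others [::] fakes) ->
    valid_block B dpool blk ->
    weak_util true dpool blk <= weak_util true hpool (honest_block hpool).

Definition c_weak_SCP (B : option nat) (c : nat) : Prop :=
  forall (vs bs others fakes : seq R) (hpool dpool blk : seq entry),
    (1 <= size vs <= c)%N -> size bs = size vs ->
    all nonneg vs -> all nonneg bs -> all nonneg others -> all nonneg fakes ->
    perm_eq hpool (truthful_pool others vs) ->
    perm_eq dpool (dev_pool others (zip bs vs) fakes) ->
    valid_block B dpool blk ->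
    weak_util true dpool blk <= weak_util true hpool (honest_block hpool).

End TFM.

(* The honest block yields the same outcome as the whole pool: the highest bid
   wins and pays the second-highest one.  Truthful bids are never penalised, so
   the honest joint utility of a miner-user coalition is the top bid when the
   coalition owns it and the second-highest bid otherwise; either way it is at
   least 0, every true value of the coalition, and the second-highest outside
   bid.  In any block a deviating miner may build, a confirmed coalition bid
   yields at most its true value (0 for a fake bid), while a confirmed outside
   bid pays the block's second bid, which is bounded by its owner's true value
   after the overbidding penalty if it belongs to the coalition, and by the
   second-highest outside bid otherwise.  For a lone user the honest utility is
   max(0, v - h), h the highest outside bid, and a deviating user who wins pays
   at least h. *)

From mathcomp Require Import all_boot all_order all_algebra.
Set Implicit Arguments. Unset Strict Implicit. Unset Printing Implicit Defensive.
Import Order.TTheory GRing.Theory Num.Theory.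
Local Open Scope ring_scope.

Section SubMultiset.
Variable T : eqType.
Implicit Types s t u : seq T.

Lemma count_mem_gt0 x s : (0 < count_mem x s)%N = (x \in s).
Proof. by rewrite -has_count has_pred1. Qed.

Definition submset s t := forall x, (count_mem x s <= count_mem x t)%N.

Lemma submset_trans t s u : submset s t -> submset t u -> submset s u.
Proof. by move=> st tu x; apply: leq_trans (st x) (tu x). Qed.

Lemma subseq_submset s t : subseq s t -> submset s t.
Proof. by move=> st x; apply: leq_count_subseq. Qed.

Lemma perm_submset s t : perm_eq s t -> submset s t.
Proof. by move/permP=> st x; rewrite st. Qed.

Lemma mem_submset s t x : submset s t -> x \in s -> x \in t.
Proof. by move=> st; rewrite -!count_mem_gt0 => /leq_trans; apply. Qed.

Lemma submset_filter (P : pred T) s t : all P s -> submset s t -> submset s (filter P t).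
Proof.
move=> /allP sP st x; rewrite count_filter.
have [xs|xNs] := boolP (x \in s).
  by rewrite (@eq_count _ _ (pred1 x)) ?st // => y /=; case: eqP => // ->; rewrite sP.
by move: xNs; rewrite -has_pred1 has_count -leqNgt leqn0 => /eqP ->.
Qed.

Lemma submset_pair s x y : x != y -> x \in s -> y \in s -> submset [:: x; y] s.
Proof.
move=> xy xs ys z /=; rewrite addn0.
have [<-|_] := eqVneq x z; first by rewrite eq_sym (negPf xy) count_mem_gt0.
by case: eqP => [<-|_]; rewrite ?count_mem_gt0.
Qed.

Lemma submset_pair_cons e f a u :
  submset [:: e; f] (a :: u) -> e \in u \/ (e = a /\ f \in u).
Proof.
move=> efu; have [|eNu] := boolP (e \in u); [by left | right].
have cu : count_mem e u = 0%N by apply/count_memPn.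
have ea : e = a.
  move: (efu e) => /=; rewrite eqxx cu addn0.
  by have [->|] := eqVneq e a.
split=> //; move: (efu f) => /=.
by rewrite ea eqxx addn0 leq_add2l count_mem_gt0.
Qed.

End SubMultiset.

Section SortedMaxima.
Variables (T : eqType) (r : rel T).
Hypotheses (r_total : total r) (r_trans : transitive r).
Implicit Types s t : seq T.

Let r_refl : reflexive r.
Proof. by move=> x; case/orP: (r_total x x). Qed.

Let submset_sort s : submset s (sort r s).
Proof. by apply: perm_submset; rewrite perm_sym perm_sort. Qed.

Lemma sort_head_max s a t y : sort r s = a :: t -> y \in s -> r a y.
Proof.
move=> sE; rewrite -(mem_sort r) sE inE => /predU1P[-> //|yt].
have := sort_sorted r_total s; rewrite sE => /(order_path_min r_trans)/allP.
exact.
Qed.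

Lemma sort_top_pair s e f t :
  sort r s = e :: f :: t -> submset [:: e; f] s /\ r e f.
Proof.
move=> sE; split; last by have := sort_sorted r_total s; rewrite sE => /andP[].
apply: (submset_trans (t := sort r s)); last first.
  by apply: perm_submset; rewrite perm_sort.
by rewrite sE; apply: subseq_submset; apply: (prefix_subseq [:: e; f]).
Qed.

Lemma sort_second_max s e f x0 :
  submset [:: e; f] s -> r e f -> r (nth x0 (sort r s) 1) f.
Proof.
move=> /submset_trans /(_ (submset_sort s)) efs ref.
have := sort_sorted r_total s.
case: (sort r s) efs => [|a [|b t]] efs.
- by have := mem_submset efs (mem_head e [:: f]).
- by case: (submset_pair_cons efs) => [|[]].
move=> /= /andP[_ /(order_path_min r_trans)/allP bt].
have b_max y : y \in b :: t -> r b y by rewrite inE => /predU1P[->|/bt].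
by case: (submset_pair_cons efs) => [/b_max/r_trans|[_ /b_max]]; apply.
Qed.

Lemma sort_second_max_rest s a t y x0 :
  sort r s = a :: t -> y \in s -> y != a -> r (nth x0 (sort r s) 1) y.
Proof.
move=> sE ys ya; have a_s : a \in s by rewrite -(mem_sort r) sE mem_head.
apply: sort_second_max (sort_head_max sE ys).
by apply: submset_pair; rewrite 1?eq_sym.
Qed.

End SortedMaxima.

Lemma mem_zip_snd (S T : eqType) (s : seq S) (t : seq T) p : p \in zip s t -> p.2 \in t.
Proof.
elim: s t => [|x s IHs] [|y t] //=; rewrite !inE => /predU1P[-> /=|/IHs ->].
  by rewrite eqxx.
by rewrite orbT.
Qed.

Section SolitaryMechanism.
Variable R : realFieldType.
Local Notation entry := (entry R).
Local Notation ge := (@ge_amt R).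
Implicit Types (p blk : seq entry) (x y : entry) (U : R) (others vs bs fakes : seq R).

Lemma ge_amt_total : total ge.
Proof. by move=> x y; rewrite /ge_amt le_total. Qed.

Lemma ge_amt_trans : transitive ge.
Proof. by move=> y x z; rewrite /ge_amt => yx zy; apply: le_trans zy yx. Qed.

Lemma sort_honest_block p : sort ge (honest_block p) = honest_block p.
Proof.
apply: (sorted_sort ge_amt_trans).
exact: (subseq_sorted ge_amt_trans (take_subseq _ _) (sort_sorted ge_amt_total p)).
Qed.

Lemma weak_util_honest_block m p : weak_util m p (honest_block p) = weak_util m p p.
Proof.
have conf : confirmed (honest_block p) = confirmed p.
  by rewrite /confirmed sort_honest_block /honest_block; case: (sort ge p) => [|? []].
have pay : payment (honest_block p) = payment p.
  by rewrite /payment sort_honest_block /honest_block nth_take.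
by rewrite /weak_util /miner_revenue /unconfirmed conf pay.
Qed.

Lemma payment_ge0 p : {in p, forall y, 0 <= y.1} -> 0 <= payment p.
Proof.
move=> p_ge0; rewrite /payment.
have [lt1|le1] := ltnP 1 (size (sort ge p)); last by rewrite nth_default.
by apply: p_ge0; rewrite -(mem_sort ge) mem_nth.
Qed.

Lemma overbid_ge0 x : 0 <= overbid x.
Proof. by case: x => b [w|]; rewrite /overbid //=; case: ifP => // /ltW; rewrite subr_ge0. Qed.

Lemma overbid_sum_ge0 (s : seq entry) : 0 <= \sum_(e <- s) overbid e.
Proof. by apply: sumr_ge0 => e _; apply: overbid_ge0. Qed.

Lemma overbid_le_sum (s : seq entry) x : x \in s -> overbid x <= \sum_(e <- s) overbid e.
Proof.
by move=> xs; rewrite (perm_big _ (perm_to_rem xs)) big_cons lerDl overbid_sum_ge0.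
Qed.

Lemma sub_overbid_le (b w : R) : b - overbid (b, Some w) <= w.
Proof.
rewrite /overbid /=; case: ifP => [_|/negbT]; last by rewrite subr0 -leNgt.
by rewrite opprB addrCA subrr addr0.
Qed.

Lemma mem_unconfirmed p blk y : y \in unconfirmed p blk -> y \in p.
Proof. by rewrite /unconfirmed; case: confirmed => // e /mem_rem. Qed.

Definition truthful p := forall y w, y \in p -> y.2 = Some w -> y.1 = w.

Lemma truthful_overbid0 p blk :
  truthful p -> \sum_(e <- unconfirmed p blk) overbid e = 0.
Proof.
move=> tp; rewrite big1_seq // => -[b [w|]] /andP[_ /mem_unconfirmed yp] //.
by have /= -> := tp _ w yp erefl; rewrite /overbid /= ltxx.
Qed.

Lemma truthful_joint_util p : truthful p ->
  weak_util true p p = if sort ge p is (x, Some _) :: _ then x else payment p.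
Proof.
move=> tp; rewrite /weak_util truthful_overbid0 // subr0 /miner_revenue /confirmed.
case E: (sort ge p) => [|[x [w|]] t] /=; rewrite ?addr0 //.
have xp : (x, Some w) \in p by rewrite -(mem_sort ge) E mem_head.
by have /= -> := tp _ w xp erefl; rewrite addrC subrK.
Qed.

Definition outside p := [seq y <- p | y.2 == None].

(* The last clause says that [U] is at least the second-highest outside bid. *)
Definition joint_bound p U : Prop :=
  [/\ 0 <= U,
      forall y w, y \in p -> y.2 = Some w -> w <= U &
      forall e f, submset [:: e; f] (outside p) -> f.1 <= e.1 -> f.1 <= U].

Lemma truthful_joint_bound p :
  truthful p -> {in p, forall y, 0 <= y.1} -> joint_bound p (weak_util true p p).
Proof.
move=> tp p_ge0; rewrite truthful_joint_util //.
have out_p e f : submset [:: e; f] (outside p) -> submset [:: e; f] p.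
  by move/submset_trans; apply; apply: subseq_submset (filter_subseq _ _).
have pay_max e f : submset [:: e; f] p -> f.1 <= e.1 -> f.1 <= payment p.
  exact: (sort_second_max ge_amt_total ge_amt_trans).
case E: (sort ge p) => [|[x [v|]] t].
- split; [exact: payment_ge0 | | by move=> e f /out_p/pay_max].
  by move=> y w; rewrite -(mem_sort ge) E.
- have top_max y : y \in p -> y.1 <= x := sort_head_max ge_amt_total ge_amt_trans E.
  split.
  + by apply: (p_ge0 (x, Some v)); rewrite -(mem_sort ge) E mem_head.
  + by move=> y w yp /(tp _ _ yp) <-; apply: top_max.
  + move=> e f /out_p efp fe; apply: le_trans fe (top_max _ _).
    exact: mem_submset efp (mem_head _ _).
- split; [exact: payment_ge0 | | by move=> e f /out_p/pay_max].
  move=> y w yp yw; rewrite -(tp _ _ yp yw).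
  apply: (sort_second_max_rest ge_amt_total ge_amt_trans _ E yp).
  by apply/eqP => yE; rewrite yE in yw.
Qed.

Lemma joint_util_le p blk U :
  submset blk p -> joint_bound p U -> weak_util true p blk <= U.
Proof.
move=> blk_p [U_ge0 U_val U_out].
have in_p y : y \in sort ge blk -> y \in p by rewrite mem_sort; apply: mem_submset.
rewrite /weak_util /miner_revenue /payment {1}/confirmed.
set pen := \sum_(e <- _) _; have pen_ge0 : 0 <= pen := overbid_sum_ge0 _.
have pen_le c : c - pen <= c by rewrite gerBl.
case E: (sort ge blk) => [|[x [w|]] t] /=.
- by rewrite addr0; apply: le_trans (pen_le 0) U_ge0.
- rewrite [_ + (w - _)]addrC subrK.
  apply: le_trans (pen_le w) (U_val (x, Some w) w _ erefl).
  by apply: in_p; rewrite E mem_head.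
case: t E => [|f t] E /=; first by rewrite addr0; apply: le_trans (pen_le 0) U_ge0.
have [ef_blk fx] := sort_top_pair ge_amt_total E.
have x_p : (x, None) \in p by apply: in_p; rewrite E mem_head.
have f_p : f \in p by apply: in_p; rewrite E !inE eqxx orbT.
rewrite addr0; case: f E ef_blk fx f_p => b [v|] E ef_blk fx f_p.
- apply: le_trans (U_val _ v f_p erefl); apply: le_trans (sub_overbid_le b v).
  rewrite lerB // /pen /unconfirmed /confirmed E /=; apply: overbid_le_sum.
  by move: f_p; rewrite (perm_mem (perm_to_rem x_p)) inE => /predU1P[].
- apply: le_trans (pen_le b) (U_out (x, None) (b, None) _ fx).
  by apply: submset_filter; last exact: submset_trans ef_blk blk_p.
Qed.

Lemma perm_joint_bound p q U : perm_eq p q -> joint_bound p U -> joint_bound q U.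
Proof.
move=> pq [U_ge0 U_val U_out]; split=> // [y w|e f efq].
  by rewrite -(perm_mem pq); apply: U_val.
by apply: U_out; apply: submset_trans efq (perm_submset (perm_filter _ _)); rewrite perm_sym.
Qed.

Lemma mem_truthful_pool others vs y : y \in truthful_pool others vs ->
  y.2 = None /\ y.1 \in others \/ exists2 v, v \in vs & y = (v, Some v).
Proof.
rewrite mem_cat => /orP[/mapP[o o_in ->]|/mapP[v v_in ->]]; first by left.
by right; exists v.
Qed.

Lemma mem_dev_pool others bvs fakes y : y \in dev_pool others bvs fakes ->
  [\/ y.2 = None /\ y.1 \in others,
      exists2 bv, bv \in bvs & y = (bv.1, Some bv.2) |
      y.2 = Some 0 /\ y.1 \in fakes].
Proof.
rewrite !mem_cat => /or3P[/mapP[o o_in ->]|/mapP[bv bv_in ->]|/mapP[f f_in ->]].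
- by apply: Or31.
- by apply: Or32; exists bv.
- by apply: Or33.
Qed.

Lemma outside_tag_out_cat others (s : seq entry) :
  all (fun y => y.2 != None) s -> outside (tag_out others ++ s) = tag_out others.
Proof.
move=> /allP s_player; rewrite /outside filter_cat.
rewrite (@eq_in_filter _ _ pred0 s) ?filter_pred0 ?cats0; last first.
  by move=> y /s_player /negPf.
by apply/all_filterP/allP => _ /mapP[o _ ->].
Qed.

Lemma truthful_pool_joint_bound others vs hp :
  all (@nonneg R) others -> all (@nonneg R) vs -> perm_eq hp (truthful_pool others vs) ->
  joint_bound hp (weak_util true hp hp).
Proof.
move=> /allP others_ge0 /allP vs_ge0 hpE.
apply: truthful_joint_bound => [y w|y]; rewrite (perm_mem hpE).
  by case/mem_truthful_pool => [[->]|[v _ ->] [->]].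
by case/mem_truthful_pool => [[_ /others_ge0]|[v /vs_ge0 ? ->]].
Qed.

Lemma deviation_joint_bound others vs bs fakes U :
  joint_bound (truthful_pool others vs) U ->
  joint_bound (dev_pool others (zip bs vs) fakes) U.
Proof.
move=> [U_ge0 U_val U_out]; split=> // [y w|].
  case/mem_dev_pool => [[->] //|[bv bv_in ->] [<-]|[-> _] [<-] //].
  apply: (U_val (bv.2, Some bv.2)) => //; rewrite mem_cat; apply/orP; right.
  exact/map_f/(mem_zip_snd bv_in).
move: U_out; rewrite /truthful_pool /dev_pool.
rewrite !outside_tag_out_cat //.
  by rewrite all_cat; apply/andP; split; apply/allP => _ /mapP[? _ ->].
by apply/allP => _ /mapP[? _ ->].
Qed.

Definition highest (s : seq R) : R := \big[Num.max/0]_(a <- s) a.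

Lemma highest_ge0 (s : seq R) : 0 <= highest s.
Proof. exact: bigmax_ge_id. Qed.

Lemma le_highest (s : seq R) a : a \in s -> a <= highest s.
Proof. by move=> a_in; apply: le_bigmax_seq. Qed.

Lemma highest_le (s : seq R) (z : R) : 0 <= z -> {in s, forall a, a <= z} -> highest s <= z.
Proof. by move=> z_ge0 s_le; rewrite /highest big_seq; apply: bigmax_le. Qed.

Lemma truthful_user_util_ge others v hp :
  all (@nonneg R) others -> 0 <= v -> perm_eq hp (truthful_pool others [:: v]) ->
  Num.max 0 (v - highest others) <= weak_util false hp hp.
Proof.
move=> /allP others_ge0 v_ge0 hpE.
have mem_hp y : y \in hp -> y = (v, Some v) \/ y.2 = None /\ y.1 \in others.
  rewrite (perm_mem hpE) => /mem_truthful_pool[|[w]]; first by right.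
  by rewrite inE => /eqP -> ->; left.
have v_hp : (v, Some v) \in hp by rewrite (perm_mem hpE) mem_cat mem_head orbT.
have v_once : count_mem (v, Some v) hp = 1%N.
  rewrite (permP hpE) count_cat (count_memPn _) /= ?eqxx //.
  by apply/mapP => -[].
have tp : truthful hp by move=> y w /mem_hp[-> [->]|[->]].
rewrite /weak_util truthful_overbid0 // subr0 add0r /confirmed ge_max.
case E: (sort ge hp) => [|[x [w|]] t] /=.
- by move: v_hp; rewrite -(mem_sort ge) E.
- have /mem_hp[[xv wv]|[]//] : (x, Some w) \in hp by rewrite -(mem_sort ge) E mem_head.
  subst x w.
  suff [pay_v pay_h] : payment hp <= v /\ payment hp <= highest others.
    by rewrite subr_ge0 pay_v lerB.
  rewrite /payment E; case: t E => [|b t] E /=; first by rewrite v_ge0 highest_ge0.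
  have [vb_hp bv] := sort_top_pair ge_amt_total E; split=> //.
  have /mem_hp[b_v|[_ /le_highest //]] : b \in hp.
    by apply: mem_submset vb_hp _; rewrite !inE eqxx orbT.
  by move: (vb_hp (v, Some v)); rewrite v_once b_v /= eqxx.
- have /mem_hp[//|[_ x_in]] : (x, None) \in hp by rewrite -(mem_sort ge) E mem_head.
  rewrite lexx subr_le0; apply: le_trans (le_highest x_in).
  exact: (sort_head_max ge_amt_total ge_amt_trans E v_hp).
Qed.

Lemma deviation_user_util_le others fakes b v dp :
  all (@nonneg R) others -> all (@nonneg R) fakes -> 0 <= b ->
  perm_eq dp (dev_pool others [:: (b, v)] fakes) ->
  weak_util false dp dp <= Num.max 0 (v - highest others).
Proof.
move=> /allP others_ge0 /allP fakes_ge0 b_ge0 dpE.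
have mem_dp y : y \in dp -> [\/ y.2 = None /\ y.1 \in others, y = (b, Some v)
                              | y.2 = Some 0 /\ y.1 \in fakes].
  rewrite (perm_mem dpE) => /mem_dev_pool[?|[bv /[1!inE] /eqP -> ->]|?].
  - exact: Or31.
  - exact: Or32.
  - exact: Or33.
have pay_ge0 : 0 <= payment dp.
  by apply: payment_ge0 => y /mem_dp[[_ /others_ge0]|->|[_ /fakes_ge0]].
rewrite /weak_util add0r {1}/confirmed le_max.
set pen := \sum_(e <- _) _; have pen_ge0 : 0 <= pen := overbid_sum_ge0 _.
case E: (sort ge dp) => [|[x [w|]] t] /=; try by rewrite sub0r oppr_le0 pen_ge0.
have x_dp : (x, Some w) \in dp by rewrite -(mem_sort ge) E mem_head.
case/mem_dp: (x_dp) => [[]//|[_ ->]|[[->] _]]; apply/orP; [right|left].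
  rewrite -[v - highest _]subr0; apply: lerB pen_ge0 => //; apply: lerB => //.
  apply: highest_le => // o o_in.
  have o_dp : (o, None) \in dp by rewrite (perm_mem dpE) mem_cat map_f.
  have /= := sort_second_max_rest ge_amt_total ge_amt_trans (0, None) E o_dp.
  by apply; apply/eqP => -[].
by rewrite sub0r -opprD oppr_le0 addr_ge0.
Qed.

Lemma coalition_util_le B others vs bs fakes hp dp blk :
  all (@nonneg R) others -> all (@nonneg R) vs ->
  perm_eq hp (truthful_pool others vs) ->
  perm_eq dp (dev_pool others (zip bs vs) fakes) ->
  valid_block B dp blk ->
  weak_util true dp blk <= weak_util true hp (honest_block hp).
Proof.
move=> others_ge0 vs_ge0 hpE dpE [_ [m blkE]].
have blk_dp : submset blk dp.
  exact: submset_trans (perm_submset blkE) (subseq_submset (mask_subseq m dp)).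
rewrite weak_util_honest_block; apply: joint_util_le blk_dp _.
rewrite perm_sym in dpE; apply: perm_joint_bound dpE _.
apply: deviation_joint_bound; apply: (perm_joint_bound hpE).
exact: truthful_pool_joint_bound others_ge0 vs_ge0 hpE.
Qed.

End SolitaryMechanism.

Theorem mainTheorem6 (R : realFieldType) (B : option nat) :
  (forall b, B = Some b -> (2 <= b)%N) ->
  weak_UIC R /\ weak_MIC R B /\ (forall c : nat, (1 <= c)%N -> c_weak_SCP R B c).
Proof.
(* The bounds hold for blocks of any size. *)
move=> _; split; [|split].
- move=> v b others fakes hp dp v_ge0 b_ge0 others_ge0 fakes_ge0 hpE dpE.
  rewrite !weak_util_honest_block.
  apply: le_trans (deviation_user_util_le others_ge0 fakes_ge0 b_ge0 dpE) _.
  exact: truthful_user_util_ge others_ge0 v_ge0 hpE.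
- move=> others fakes hp dp blk others_ge0 _ hpE dpE.
  exact: (coalition_util_le (bs := [::]) others_ge0 _ hpE dpE).
- move=> c _ vs bs others fakes hp dp blk _ _ vs_ge0 _ others_ge0 _ hpE dpE.
  exact: coalition_util_le others_ge0 vs_ge0 hpE dpE.
Qed.
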